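(* For every integer $N\ge 1$, \[ \tilde S(N)-S(N)\le N\tau(N)\quad\text{and}\quad S(N)-\bar S(N)\le N\tau(N). \]
   Context: For $E\subset\mathbb{R}$, $q(E)=\min\{q\in\mathbb{N}^*:\exists p\in\mathbb{Z},\ p/q\in E\}$ (the smallest denominator of a rational number in $E$). Define $S(N)=\sum_{j=1}^N q\big(\,]\tfrac{j-1}N,\tfrac jN]\,\big)$, $\bar S(N)=\sum_{j=1}^N q\big([\tfrac{j-1}N,\tfrac jN]\big)$, $\tilde S(N)=\sum_{j=1}^N q\big(\,]\tfrac{j-1}N,\tfrac jN[\,\big)$. $\tau(N)$ is the number of divisors of $N$. *)

From HB Require Import structures.
From mathcomp Require Import all_boot all_order all_algebra.
From mathcomp Require Import boolp.
Set Implicit Arguments. Unset Strict Implicit. Unset Printing Implicit Defensive.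
Import Order.TTheory GRing.Theory Num.Theory.

Local Open Scope ring_scope.

Definition has_frac (E : {pred rat}) (q : nat) : Prop :=
  (0 < q)%N /\ exists p : int, (p%:~R / q%:R : rat) \in E.

(* q(E) = min { q in N* : exists p in Z, p/q in E }  (0 if no such q,
   which never happens for the intervals used below). *)
Definition qmin (E : {pred rat}) : nat :=
  match pselect (exists q, `[< has_frac E q >]) with
  | left ex => ex_minn ex
  | right _ => 0%N
  end.

Definition S (N : nat) : nat :=
  (\sum_(1 <= j < N.+1) qmin (mem `]((j.-1)%:R / N%:R : rat), (j%:R / N%:R)]))%N.
Definition Sbar (N : nat) : nat :=
  (\sum_(1 <= j < N.+1) qmin (mem `[((j.-1)%:R / N%:R : rat), (j%:R / N%:R)]))%N.
Definition Stilde (N : nat) : nat :=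
  (\sum_(1 <= j < N.+1) qmin (mem `]((j.-1)%:R / N%:R : rat), (j%:R / N%:R)[))%N.

Definition tau (N : nat) : nat := size (divisors N).

From HB Require Import structures.
From mathcomp Require Import all_boot all_order all_algebra.
From mathcomp Require Import boolp zify.
Import Order.TTheory GRing.Theory Num.Theory.

(* The three sums differ term by term only in whether the endpoints
   (j-1)/N and j/N belong to the interval.  Removing an endpoint y = k/N can
   raise the minimal denominator only if that minimum was attained at y, and
   then it is at least d = N/g with g = gcd(k, N).  Writing y = a/d with a and
   d coprime, Bezout gives a fraction n/q strictly inside the interval with
   g < q <= g + d, so each term grows by at most g.  Finally
   sum_(j=1..N) gcd(j, N) <= sum_(d | N) d * #{j <= N : d | j} = N tau(N). *)

Set Implicit Arguments.
Unset Strict Implicit.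
Unset Printing Implicit Defensive.

Lemma mod_window d g x : 0 < d -> exists2 q, g < q <= g + d & q = x %[mod d].
Proof.
move=> d_gt0; have r_lt := ltn_pmod x d_gt0; have g_eq := divn_eq g d.
have g_lt := ltn_pmod g d_gt0.
have [lt|ge] := ltnP g (g %/ d * d + x %% d).
  by exists (g %/ d * d + x %% d); [lia | rewrite modnMDl modn_mod].
by exists ((g %/ d).+1 * d + x %% d); [lia | rewrite modnMDl modn_mod].
Qed.

Lemma coprime_window a d g r : 0 < d -> coprime d a ->
  exists q n, g < q <= g + d /\ n * d = a * q + r.
Proof.
move=> d_gt0 co_da; have [u _] := Bezoutl a d_gt0.
rewrite (eqP co_da) => dvd_inv.
have [q win q_eq] := mod_window g (u * r) d_gt0.
have dvd_aq : d %| a * q + r.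
  rewrite /dvdn -modnDml -modnMmr q_eq modnMmr modnDml.
  have -> : a * (u * r) + r = (1 + u * a) * r by nia.
  by rewrite -modnMml (eqP dvd_inv) mul0n mod0n.
by exists q, ((a * q + r) %/ d); rewrite divnK.
Qed.

Section Grid.

Variables k N : nat.
Hypothesis N_gt0 : 0 < N.

Lemma gcdn_grid_gt0 : 0 < gcdn k N.
Proof. by rewrite gcdn_gt0 N_gt0 orbT. Qed.

Lemma coprime_divn_gcd : coprime (N %/ gcdn k N) (k %/ gcdn k N).
Proof.
have g_gt0 := gcdn_grid_gt0.
rewrite /coprime -(eqn_pmul2r g_gt0) mul1n muln_gcdl !divnK ?dvdn_gcdl ?dvdn_gcdr //.
by rewrite gcdnC.
Qed.

Lemma grid_right_neighbor : exists q n,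
  gcdn k N < q <= gcdn k N + N %/ gcdn k N /\ n * N = k * q + gcdn k N.
Proof.
have g_gt0 := gcdn_grid_gt0.
have eN := divnK (dvdn_gcdr k N); have ek := divnK (dvdn_gcdl k N).
have d_gt0 : 0 < N %/ gcdn k N by rewrite divn_gt0 // dvdn_leq // dvdn_gcdr.
have [q [n [win eq_n]]] := coprime_window (gcdn k N) 1 d_gt0 coprime_divn_gcd.
exists q, n; split => //; set g := gcdn k N in eN ek eq_n *.
by rewrite -eN -ek mulnA eq_n mulnDl mul1n mulnAC.
Qed.

Lemma grid_left_neighbor : 0 < k -> exists q n,
  gcdn k N < q <= gcdn k N + N %/ gcdn k N /\ n * N + gcdn k N = k * q.
Proof.
move=> k_gt0; have g_gt0 := gcdn_grid_gt0.
have eN := divnK (dvdn_gcdr k N); have ek := divnK (dvdn_gcdl k N).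
have d_gt0 : 0 < N %/ gcdn k N by rewrite divn_gt0 // dvdn_leq // dvdn_gcdr.
have a_gt0 : 0 < k %/ gcdn k N by rewrite divn_gt0 // dvdn_leq // dvdn_gcdl.
(* Taking [r = d - 1] gives [a q = 1 %[mod d]]: [n/q] lies just left of [a/d]. *)
have [q [[|n] [win eq_n]]] :=
  coprime_window (gcdn k N) (N %/ gcdn k N).-1 d_gt0 coprime_divn_gcd.
  have : 0 < k %/ gcdn k N * q by rewrite muln_gt0 a_gt0; lia.
  lia.
exists q, n; split => //.
have {}eq_n : n * (N %/ gcdn k N) + 1 = k %/ gcdn k N * q by rewrite mulSn in eq_n; lia.
set g := gcdn k N in eN ek eq_n *.
by rewrite -eN -ek mulnA -mulSnr -addn1 eq_n mulnAC.
Qed.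

End Grid.

Lemma sum_gcdn_le N : 0 < N -> \sum_(1 <= j < N.+1) gcdn j N <= N * tau N.
Proof.
move=> N_gt0.
have gcd_le j : gcdn j N <= \sum_(d <- divisors N) d * (d %| j).
  have g_div : gcdn j N \in divisors N by rewrite -dvdn_divisors // dvdn_gcdr.
  rewrite (bigD1_seq _ g_div (divisors_uniq N)) /= dvdn_gcdl muln1.
  exact: leq_addr.
apply: leq_trans; first by apply: leq_sum => j _; exact: gcd_le.
rewrite exchange_big /= (eq_big_seq (fun _ => N)) => [|d dN].
  by rewrite big_const_seq count_predT /tau iter_addn_0 mulnC.
by rewrite -big_distrr /= -divn_count_dvd mulnC divnK // dvdn_divisors.
Qed.

Lemma sum_gcdn_pred N : 0 < N ->
  \sum_(1 <= j < N.+1) gcdn j.-1 N = \sum_(1 <= j < N.+1) gcdn j N.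
Proof.
by move=> N_gt0; rewrite big_add1 /= big_ltn // big_nat_recr //= gcd0n gcdnn addnC.
Qed.

Local Open Scope ring_scope.

Lemma ltr_ratio_nat (R : numFieldType) (a b c e : nat) : (0 < b)%N -> (0 < e)%N ->
  ((a%:R / b%:R : R) < c%:R / e%:R) = (a * e < c * b)%N.
Proof.
move=> b_gt0 e_gt0.
rewrite ltr_pdivrMr ?ltr0n // mulrAC ltr_pdivlMr ?ltr0n // -!natrM ltr_nat.
by rewrite mulnC [(c * b)%N]mulnC.
Qed.

Lemma ler_ratio_nat (R : numFieldType) (a b c e : nat) : (0 < b)%N -> (0 < e)%N ->
  ((a%:R / b%:R : R) <= c%:R / e%:R) = (a * e <= c * b)%N.
Proof.
move=> b_gt0 e_gt0.
rewrite ler_pdivrMr ?ltr0n // mulrAC ler_pdivlMr ?ltr0n // -!natrM ler_nat.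
by rewrite mulnC [(c * b)%N]mulnC.
Qed.

Lemma has_frac_nat (E : {pred rat}) (n q : nat) :
  (0 < q)%N -> n%:R / q%:R \in E -> has_frac E q.
Proof. by move=> q_gt0 nqE; split=> //; exists n%:Z; rewrite pmulrn. Qed.

Lemma qmin_le (E : {pred rat}) q : has_frac E q -> (qmin E <= q)%N.
Proof.
move=> Eq; rewrite /qmin; case: pselect => [ex|[]]; last by exists q; apply/asboolP.
by case: ex_minnP => m _; apply; apply/asboolP.
Qed.

Lemma has_frac_qmin (E : {pred rat}) q : has_frac E q -> has_frac E (qmin E).
Proof.
move=> Eq; rewrite /qmin; case: pselect => [ex|[]]; last by exists q; apply/asboolP.
by case: ex_minnP => m /asboolP.
Qed.

Lemma qmin_le_removed_point (E F : {pred rat}) (y : rat) (m c q0 q : nat) :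
  {in F, forall x, x != y -> x \in E} ->
  (forall (p : int) (n : nat), (0 < n)%N -> p%:~R / n%:R = y -> (m <= n)%N) ->
  has_frac F q0 -> has_frac E q -> (q <= c + m)%N ->
  (qmin E <= qmin F + c)%N.
Proof.
move=> FE y_den /has_frac_qmin[qF_gt0 [p pF]] Eq q_le.
have [/(y_den _ _ qF_gt0) m_le|p_neq] := eqVneq (p%:~R / (qmin F)%:R) y.
  by have := qmin_le Eq; lia.
by apply: leq_trans (leq_addr c _); apply: qmin_le; split=> //; exists p; apply: FE.
Qed.

Section GridFractions.

Variables k N : nat.
Hypothesis N_gt0 : (0 < N)%N.

Lemma grid_denom_le (p : int) m : (0 < m)%N ->
  p%:~R / m%:R = k%:R / N%:R :> rat -> (N %/ gcdn k N <= m)%N.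
Proof.
move=> m_gt0 eq_pk.
have eq_int : p * N%:Z = k%:Z * m%:Z.
  apply/eqP; rewrite -(eqr_int rat) !rmorphM /=.
  by move/eqP: eq_pk; rewrite eqr_div ?pnatr_eq0 -?lt0n.
have [n eq_n] : exists n : nat, p = n%:Z.
  by clear eq_pk; case: p eq_int => n; [exists n | lia].
have g_gt0 := gcdn_grid_gt0 k N_gt0.
have eN := divnK (dvdn_gcdr k N); have ek := divnK (dvdn_gcdl k N).
have eq_red : (n * (N %/ gcdn k N) = k %/ gcdn k N * m)%N.
  apply/eqP; rewrite -(eqn_pmul2r g_gt0) -mulnA eN mulnAC ek; apply/eqP.
  by move: eq_int; rewrite eq_n; lia.
apply: dvdn_leq => //; rewrite -(Gauss_dvdr _ (coprime_divn_gcd k N_gt0)) -eq_red.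
exact: dvdn_mull.
Qed.

Lemma has_frac_left_of_grid : (0 < k)%N ->
  exists2 q, has_frac (mem `]((k.-1)%:R / N%:R : rat), k%:R / N%:R[) q
           & (q <= gcdn k N + N %/ gcdn k N)%N.
Proof.
move=> k_gt0; have [q [n [/andP[q_gt q_le] eq_n]]] := grid_left_neighbor N_gt0 k_gt0.
exists q => //; have q_gt0 : (0 < q)%N := leq_ltn_trans (leq0n _) q_gt.
apply: (has_frac_nat (n := n) q_gt0); rewrite in_itv /= !ltr_ratio_nat //.
have : (k.-1 * q + q = k * q)%N by rewrite -mulSnr prednK.
have := gcdn_grid_gt0 k N_gt0; lia.
Qed.

Lemma has_frac_right_of_grid :
  exists2 q, has_frac (mem `](k%:R / N%:R : rat), k.+1%:R / N%:R]) q
           & (q <= gcdn k N + N %/ gcdn k N)%N.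
Proof.
have [q [n [/andP[q_gt q_le] eq_n]]] := grid_right_neighbor k N_gt0.
exists q => //; have q_gt0 : (0 < q)%N := leq_ltn_trans (leq0n _) q_gt.
apply: (has_frac_nat (n := n) q_gt0); rewrite in_itv /= ltr_ratio_nat // ler_ratio_nat //.
have := gcdn_grid_gt0 k N_gt0; rewrite mulSn; lia.
Qed.

Lemma qmin_oo_le_oc : (0 < k)%N ->
  (qmin (mem `]((k.-1)%:R / N%:R : rat), k%:R / N%:R[) <=
   qmin (mem `]((k.-1)%:R / N%:R : rat), k%:R / N%:R]) + gcdn k N)%N.
Proof.
move=> k_gt0; have [q Eq q_le] := has_frac_left_of_grid k_gt0.
apply: (qmin_le_removed_point (y := k%:R / N%:R) _ grid_denom_le _ Eq q_le).
  by move=> x; rewrite !in_itv /= => /andP[-> x_le] x_neq; rewrite lt_neqAle x_neq.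
apply: (has_frac_nat (n := k) N_gt0); rewrite in_itv /= lexx andbT ltr_ratio_nat //.
by rewrite ltn_pmul2r // ltn_predL.
Qed.

Lemma qmin_oc_le_cc :
  (qmin (mem `](k%:R / N%:R : rat), k.+1%:R / N%:R]) <=
   qmin (mem `[(k%:R / N%:R : rat), k.+1%:R / N%:R]) + gcdn k N)%N.
Proof.
have [q Eq q_le] := has_frac_right_of_grid.
apply: (qmin_le_removed_point (y := k%:R / N%:R) _ grid_denom_le _ Eq q_le).
  by move=> x; rewrite !in_itv /= => /andP[x_ge ->] x_neq; rewrite lt_neqAle eq_sym x_neq x_ge.
apply: (has_frac_nat (n := k.+1) N_gt0); rewrite in_itv /= lexx andbT ler_ratio_nat //.
by rewrite leq_pmul2r.
Qed.

End GridFractions.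

Theorem proposition7 (N : nat) : (1 <= N)%N ->
  ((Stilde N)%:Z - (S N)%:Z <= (N * tau N)%:Z)%R /\
  ((S N)%:Z - (Sbar N)%:Z <= (N * tau N)%:Z)%R.
Proof.
move=> N_gt0; have sum_le := sum_gcdn_le N_gt0.
have oo_oc : (Stilde N <= S N + \sum_(1 <= j < N.+1) gcdn j N)%N.
  rewrite /Stilde /S -big_split /=.
  rewrite [X in (X <= _)%N]big_nat_cond [X in (_ <= X)%N]big_nat_cond.
  by apply: leq_sum => j /andP[/andP[j_gt0 _] _]; apply: qmin_oo_le_oc.
have oc_cc : (S N <= Sbar N + \sum_(1 <= j < N.+1) gcdn j N)%N.
  rewrite -sum_gcdn_pred // /S /Sbar -big_split /=.
  rewrite [X in (X <= _)%N]big_nat_cond [X in (_ <= X)%N]big_nat_cond.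
  apply: leq_sum => j /andP[/andP[j_gt0 _] _].
  by have := qmin_oc_le_cc j.-1 N_gt0; rewrite prednK.
split; lia.
Qed.
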